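(* Let $\mathcal{T}$ be the tree constructed below in a metric space of doubling dimension at most $\kappa$. Every node $\langle j,r\rangle$ of $\mathcal{T}$ has at most $2^{4\kappa}$ children.
   Context: $(V,d)$ is a metric space of diameter $W$ whose doubling dimension is at most $\kappa$: every ball $B(x,\rho)=\{y\in V:d(x,y)\le\rho\}$ can be covered by $2^\kappa$ balls of radius $\rho/2$. $F\subseteq V$ is a finite set of facilities with opening costs $f_j>0$, $f_{\min}=\min_j f_j$. Let $\rho_{\min}=\lfloor\log_5 f_{\min}\rfloor$, $\rho_{\max}=\lceil\log_5 W\rceil$. For each integer $r\in[\rho_{\min},\rho_{\max}]$, let $J'_r=\{j\in F:f_j\le 5^r\}$ and let $J_r$ be a maximal subset of $J'_r$ such that any two facilities of $J_r$ are at distance greater than $5^{r+1}$. $\Pi=\{\langle j,r\rangle:\rho_{\min}\le r\le\rho_{\max},\ j\in J_r\}$. The tree $\mathcal{T}$ on $\Pi$ has as root the unique pair with $r=\rho_{\max}$, and for $r<\rho_{\max}$ and $j\in J_r$, $\mathrm{parent}(j,r)=\langle j',r+1\rangle$ where $j'$ is a facility of $J_{r+1}$ closest to $j$ (ties broken arbitrarily). *)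

From HB Require Import structures.
From mathcomp Require Import all_boot all_order all_algebra.
From mathcomp Require Import all_classical all_reals all_analysis.
Set Implicit Arguments. Unset Strict Implicit. Unset Printing Implicit Defensive.
Import Order.TTheory GRing.Theory Num.Theory.
Local Open Scope classical_set_scope.
Local Open Scope ring_scope.

Section Defs.
Variables (R : realType) (V : eqType).
Implicit Types (d : V -> V -> R).

Definition is_metric d : Prop :=
  [/\ forall x y, 0 <= d x y,
      forall x y, d x y = 0 <-> x = y,
      forall x y, d x y = d y x &
      forall x y z, d x z <= d x y + d y z].

Definition mball d (x : V) (rho : R) : set V := [set y | d x y <= rho].

Definition doubling_dim_le d (kappa : R) : Prop :=
  forall (x : V) (rho : R), exists S : seq V,
    (size S)%:R <= 2 `^ kappa /\
    mball d x rho `<=` [set y | exists2 c, c \in S & mball d c (rho / 2) y].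

Definition is_diameter d (W : R) : Prop :=
  (forall x y, d x y <= W) /\
  (forall e, 0 < e -> exists x y, W - e < d x y).

(* minimum opening cost over the (nonempty) facility list F *)
Definition fmin (f : V -> R) (F : seq V) : R :=
  match F with
  | [::] => 0
  | j :: s => foldr (fun k m => Num.min (f k) m) (f j) s
  end.

Definition log5 (x : R) : R := ln x / ln 5.
Definition rho_min (f : V -> R) (F : seq V) : int := Num.floor (log5 (fmin f F)).
Definition rho_max (W : R) : int := Num.ceil (log5 W).

Definition Jprime (f : V -> R) (F : seq V) (r : int) : set V :=
  [set j | j \in F /\ f j <= 5%:R ^ r].

Definition separated d (S : set V) (delta : R) : Prop :=
  forall a b, S a -> S b -> a <> b -> delta < d a b.

Definition is_J_r d (f : V -> R) (F : seq V) (r : int) (Jr : set V) : Prop :=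
  [/\ Jr `<=` Jprime f F r,
      separated d Jr (5%:R ^ (r + 1)) &
      forall S : set V, Jr `<=` S -> S `<=` Jprime f F r ->
        separated d S (5%:R ^ (r + 1)) -> S = Jr].

(* par j r = j' where parent(j,r) = <j', r+1>, j' a facility of J_{r+1}
   closest to j *)
Definition is_parent_fun d (J : int -> set V) (lo hi : int)
  (par : V -> int -> V) : Prop :=
  forall (r : int) (j : V), (lo <= r)%R -> (r < hi)%R -> J r j ->
    J (r + 1) (par j r) /\ (forall k, J (r + 1) k -> d j (par j r) <= d j k).

Definition is_child (J : int -> set V) (lo : int) (par : V -> int -> V)
  (j : V) (r : int) (c : V) : Prop :=
  (lo <= r - 1)%R /\ J (r - 1) c /\ par c (r - 1) = j.

End Defs.

From Pilot Require Import Defs.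
From HB Require Import structures.
From mathcomp Require Import all_boot all_order all_algebra.
From mathcomp Require Import all_classical all_reals all_analysis.
From mathcomp Require Import lra.
Import Order.TTheory GRing.Theory Num.Theory.
Local Open Scope classical_set_scope.
Local Open Scope ring_scope.

(** The children of <j, r> are facilities of J_(r-1): they are pairwise more
  than 5^r apart, and they all lie within 5^(r+1) of j, since a child farther
  from J_r than 5^(r+1) could be added to J_r, against its maximality.
  Applying the doubling property four times covers the ball B(j, 5^(r+1)) by
  2^(4 kappa) balls of radius 5^(r+1)/16, and each of them, having diameter
  less than 5^r, contains at most one child. *)

Lemma uniq_size_le_rel (T : eqType) (P : rel T) (s t : seq T) :
  uniq s -> (forall x, x \in s -> has (P x) t) ->
  {in s &, forall x y z, P x z -> P y z -> x = y} ->
  (size s <= size t)%N.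
Proof.
move=> s_uniq s_cov P_inj.
pose g x := nth x t (find (P x) t).
have g_mem x : x \in s -> g x \in t by move=> /s_cov; rewrite has_find; apply: mem_nth.
have g_P x : x \in s -> P x (g x) by move=> /s_cov /(nth_find x).
rewrite -(size_map g); apply: uniq_leq_size.
- rewrite map_inj_in_uniq // => x y xs ys gxy.
  by apply: (P_inj x y xs ys (g y)); [rewrite -gxy |]; apply: g_P.
- by move=> _ /mapP [x xs ->]; apply: g_mem.
Qed.

Section Metric.
Context {R : realType} {V : eqType} (d : V -> V -> R).
Hypothesis d_metric : is_metric d.

Definition mballs (S : seq V) (t : R) : set V :=
  [set y | exists2 c, c \in S & mball d c t y].

Lemma packing_size_le {s S : seq V} {t : R} :
  uniq s -> (forall x, x \in s -> mballs S t x) ->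
  {in s &, forall x y, x <> y -> 2 * t < d x y} -> (size s <= size S)%N.
Proof.
have [_ _ d_sym d_tri] := d_metric.
move=> s_uniq s_cov s_sep.
apply: (@uniq_size_le_rel _ (fun x c => d c x <= t)) => //.
  by move=> x /s_cov [c cS dcx]; apply/hasP; exists c.
move=> x y xs ys c dcx dcy; apply: contrapT => xy.
have := s_sep x y xs ys xy; have := d_tri x c y.
rewrite d_sym in dcx; lra.
Qed.

Lemma maximal_separated_near {A M : set V} {delta : R} {x : V} :
  0 <= delta -> M `<=` A -> Defs.separated d M delta ->
  (forall S, M `<=` S -> S `<=` A -> Defs.separated d S delta -> S = M) ->
  A x -> exists2 m, M m & d x m <= delta.
Proof.
have [_ d_eq0 d_sym _] := d_metric.
move=> delta_ge0 MA M_sep M_max Ax; apply: contrapT => x_far.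
have x_farM m : M m -> delta < d x m.
  by move=> Mm; rewrite ltNge; apply/negP => dxm; apply: x_far; exists m.
have Mx : M x.
  rewrite -(M_max (M `|` [set x])); [by right | by move=> ? ?; left | |].
  - by move=> y [/MA //| ->].
  - move=> a b [Ma|->] [Mb|->] ab //; first exact: M_sep.
    + by rewrite d_sym; apply: x_farM.
    + exact: x_farM.
by apply: x_far; exists x; rewrite // (proj2 (d_eq0 x x)).
Qed.

Context {kappa : R}.
Hypothesis d_doubling : doubling_dim_le d kappa.

Lemma mballs_halve (S : seq V) (t : R) : exists T : seq V,
  (size T)%:R <= (size S)%:R * 2 `^ kappa /\ mballs S t `<=` mballs T (t / 2).
Proof.
elim: S => [|a S [T [T_size T_cov]]].
  by exists [::]; split; [rewrite mul0r | move=> y [c]].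
have [A [A_size A_cov]] := d_doubling a t.
exists (A ++ T); split.
  by rewrite size_cat natrD /= -addn1 natrD mulrDl mul1r addrC lerD.
move=> y [c]; rewrite inE => /orP [/eqP -> /A_cov [c' c'A yc'] |cS yc].
  by exists c'; rewrite ?mem_cat ?c'A.
have [c' c'T yc'] := T_cov y (ex_intro2 _ _ c cS yc).
by exists c'; rewrite ?mem_cat ?c'T ?orbT.
Qed.

Lemma mball_cover_expn (n : nat) (x : V) (rho : R) : exists T : seq V,
  (size T)%:R <= 2 `^ (n%:R * kappa) /\ mball d x rho `<=` mballs T (rho / 2 ^+ n).
Proof.
elim: n => [|n [T [T_size T_cov]]].
  exists [:: x]; split; first by rewrite mul0r powRr0.
  by move=> y xy; exists x; rewrite ?mem_head ?expr0 ?divr1.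
have [T' [T'_size T'_cov]] := mballs_halve T (rho / 2 ^+ n).
exists T'; split.
  rewrite -[n.+1]addn1 natrD mulrDl mul1r powRD ?pnatr_eq0 ?implybT //.
  by apply: le_trans T'_size _; rewrite ler_wpM2r ?powR_ge0.
by rewrite exprSr invfM mulrA => y /T_cov /T'_cov.
Qed.

End Metric.

Section FacilityTree.
Context {R : realType} {V : eqType} {d : V -> V -> R} {f : V -> R} {F : seq V}.
Context {J : int -> set V} {par : V -> int -> V} {lo hi : int}.
Hypotheses (d_metric : is_metric d)
  (J_max : forall r, lo <= r <= hi -> is_J_r d f F r (J r))
  (par_nearest : is_parent_fun d J lo hi par).

Lemma Jprime_homo (r r' : int) : r <= r' -> Jprime f F r `<=` Jprime f F r'.
Proof.
move=> rr' j [jF fj]; split => //.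
by apply: le_trans fj _; apply: ler_weXz2l; rewrite ?ler1n.
Qed.

Lemma child_dist_le {j c : V} {r : int} : lo <= r <= hi ->
  is_child J lo par j r c -> d j c <= 5%:R ^ (r + 1).
Proof.
have [_ _ d_sym _] := d_metric.
move=> /andP [lo_r r_hi] [lo_r1 [Jc par_c]].
have r1_hi : r - 1 < hi by apply: lt_le_trans r_hi; rewrite gtrBl.
have [Jr_Jprime Jr_sep Jr_max] := J_max _ (introT andP (conj lo_r r_hi)).
have [Jr1_Jprime _ _] := J_max _ (introT andP (conj lo_r1 (ltW r1_hi))).
have [_ c_nearest] := par_nearest _ _ lo_r1 r1_hi Jc.
rewrite subrK par_c in c_nearest.
have c_Jprime : Jprime f F r c.
  by apply: Jprime_homo (Jr1_Jprime _ Jc); rewrite gerBl.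
have [m Jm dcm] := maximal_separated_near d d_metric
  (exprz_ge0 _ (ler0n _ 5)) Jr_Jprime Jr_sep Jr_max c_Jprime.
by rewrite d_sym; apply: le_trans dcm; apply: c_nearest.
Qed.

Lemma children_separated {j c c' : V} {r : int} : r <= hi ->
  is_child J lo par j r c -> is_child J lo par j r c' -> c <> c' ->
  5%:R ^ r < d c c'.
Proof.
move=> r_hi [lo_r1 [Jc _]] [_ [Jc' _]] cc'.
have r1_hi : r - 1 <= hi by apply: le_trans r_hi; rewrite gerBl.
have [_ Jr1_sep _] := J_max _ (introT andP (conj lo_r1 r1_hi)).
by rewrite -{1}(subrK 1 r); apply: Jr1_sep.
Qed.

End FacilityTree.

Theorem lemma4 (R : realType) (V : eqType) (d : V -> V -> R) (W kappa : R)
  (F : seq V) (f : V -> R) (J : int -> set V) (par : V -> int -> V) :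
  is_metric d -> is_diameter d W -> doubling_dim_le d kappa ->
  F <> [::] -> (forall j, j \in F -> 0 < f j) ->
  (forall r : int, rho_min f F <= r <= rho_max W -> is_J_r d f F r (J r)) ->
  is_parent_fun d J (rho_min f F) (rho_max W) par ->
  forall (j : V) (r : int), rho_min f F <= r <= rho_max W -> J r j ->
  forall s : seq V, uniq s -> (forall c, c \in s -> is_child J (rho_min f F) par j r c) ->
  (size s)%:R <= 2 `^ (4 * kappa).
Proof.
move=> d_metric _ d_doubling _ _ J_max par_nearest j r r_range _ s s_uniq s_child.
have [T [T_size T_cov]] := mball_cover_expn d d_doubling 4 j (5%:R ^ (r + 1)).
apply: le_trans T_size; rewrite ler_nat.
apply: (packing_size_le d d_metric s_uniq) => [c cs | c c' cs c's cc'].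
  exact/T_cov/(child_dist_le d_metric J_max par_nearest r_range (s_child c cs)).
have /andP [_ r_hi] := r_range.
have := children_separated J_max r_hi (s_child c cs) (s_child c' c's) cc'.
have five_pow_gt0 : (0 : R) < 5%:R ^ r by apply: exprz_gt0.
rewrite exprzDr ?unitfE ?pnatr_eq0 // expr1z; lra.
Qed.
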